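(* Fix $\lambda>0$ and let $g(\lambda) = (1-e^{-\lambda})/\lambda$. Let $\mathbb P_p$ be the set of finite point-mass probability measures on $\mathbb R$, i.e. measures $\rho = \sum_{k=1}^n a_k\delta_{x_k}$ with $n \in \mathbb N$, $x_k \in \mathbb R$, $a_k \geqslant 0$, $\sum_k a_k = 1$, and let $N_p = \{\rho\in\mathbb P_p : \langle\rho,x\rangle = 0\}$, where $\langle\rho,x\rangle = \sum_k a_kx_k$. Define $A$ on $\mathbb P_p\setminus N_p$ by $$A(\rho) = \left(1 - g(\lambda) + g(\lambda)\frac{x}{\langle \rho, x\rangle}\right)\rho = \sum_k a_k\left(1 - g(\lambda) + g(\lambda)\frac{x_k}{\langle \rho, x\rangle}\right)\delta_{x_k}.$$ Equip $\mathbb P_p\setminus N_p$ and the target with the topology in which $\rho_n \to \rho$ iff $\int\phi\,d\rho_n \to \int\phi\,d\rho$ for every continuous compactly supported $\phi\colon\mathbb R\to\mathbb R$ (the subspace topology from the space of Radon measures / generalized functions on $C_c$ with the weak topology). Then $A$ is continuous at no point of $\mathbb P_p\setminus N_p$.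
   Context: $\delta_a$ denotes the Dirac measure at $a$; $\mathbb N$ includes $0$ but here $n\geqslant 1$ is implicit since $\rho$ is a probability measure. *)

From Stdlib Require Import Reals List.
Import ListNotations.
Open Scope R_scope.

(* A finite point-mass (signed) measure  sum_k a_k delta_{x_k}
   represented by the list of pairs (a_k, x_k). *)
Definition pmeasure := list (R * R).

Definition integ (rho : pmeasure) (phi : R -> R) : R :=
  fold_right (fun p acc => fst p * phi (snd p) + acc) 0 rho.

Definition mean (rho : pmeasure) : R := integ rho (fun x => x).

Definition is_Pp (rho : pmeasure) : Prop :=
  Forall (fun p => 0 <= fst p) rho /\ integ rho (fun _ => 1) = 1.

Definition g (lam : R) : R := (1 - exp (- lam)) / lam.

Definition Aop (lam : R) (rho : pmeasure) : pmeasure :=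
  map (fun p => (fst p * (1 - g lam + g lam * snd p / mean rho), snd p)) rho.

Definition Cc (phi : R -> R) : Prop :=
  continuity phi /\ exists M, forall x, M < Rabs x -> phi x = 0.

Definition near (ps : list (R -> R)) (eps : R) (mu nu : pmeasure) : Prop :=
  Forall (fun phi => Rabs (integ nu phi - integ mu phi) < eps) ps.

(* continuity of A at rho, domain P_p \ N_p, both sides with the
   weak topology generated by the maps mu |-> int phi dmu, phi in C_c *)
Definition A_continuous_at (lam : R) (rho : pmeasure) : Prop :=
  forall (ps : list (R -> R)) (eps : R), Forall Cc ps -> 0 < eps ->
  exists (qs : list (R -> R)) (delta : R), Forall Cc qs /\ 0 < delta /\
    forall sigma : pmeasure, is_Pp sigma -> mean sigma <> 0 ->
      near qs delta rho sigma -> near ps eps (Aop lam rho) (Aop lam sigma).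

(* Moving a small mass [t] of [rho] to a far point [y] gives
   [sigma = (1 - t) rho + t delta_y], which is vaguely close to [rho]: the
   test functions do not see [y], and the rest changes by a factor [1 - t].
   But the mean of [sigma] is about [t y], as large as we like.  Against a
   test function equal to [1] on the support of [rho] and [0] at [y],
   [A(rho)] has mass [1] while [A(sigma)] has mass about
   [(1 - t) (1 - g + g m / (t y))], close to [1 - g].  Since [g > 0], the
   images stay [g/2] apart. *)

From Stdlib Require Import Reals List Lra.
Import ListNotations.
Open Scope R_scope.

Lemma Forall_exists_uniform {A : Type} (P : R -> A -> Prop) (l : list A) :
  (forall a M M', M <= M' -> P M a -> P M' a) ->
  Forall (fun a => exists M, P M a) l -> exists M, 0 <= M /\ Forall (P M) l.
Proof.
  intros Pmono; induction 1 as [|a l [Ma HMa] _ [M [HM0 HM]]].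
  - exists 0; split; [lra|constructor].
  - exists (Rmax Ma M); split; [eapply Rle_trans; [exact HM0|apply Rmax_r]|].
    constructor.
    + exact (Pmono a Ma _ (Rmax_l _ _) HMa).
    + refine (Forall_impl _ _ HM); intros b; apply Pmono, Rmax_r.
Qed.

Lemma Forall_exists_bound {A : Type} (f : A -> R) (l : list A) :
  exists K, 0 <= K /\ Forall (fun a => Rabs (f a) <= K) l.
Proof.
  apply (Forall_exists_uniform (fun K a => Rabs (f a) <= K)).
  - intros a M M'; lra.
  - apply Forall_forall; intros a _; exists (Rabs (f a)); lra.
Qed.

Lemma Cc_common_radius (ps : list (R -> R)) :
  Forall Cc ps ->
  exists M, 0 <= M /\ Forall (fun phi => forall x, M < Rabs x -> phi x = 0) ps.
Proof.
  intros Hps; apply Forall_exists_uniform.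
  - intros phi M M' HMM' Hphi x Hx; apply Hphi; lra.
  - refine (Forall_impl _ _ Hps); intros phi [_ Hphi]; exact Hphi.
Qed.

Section Integration.

Implicit Types (l : pmeasure) (f h : R -> R).

Lemma integ_app l1 l2 f : integ (l1 ++ l2) f = integ l1 f + integ l2 f.
Proof. induction l1 as [|p l IH]; simpl; [lra|rewrite IH; lra]. Qed.

Lemma integ_plus l f h : integ l (fun x => f x + h x) = integ l f + integ l h.
Proof. induction l as [|p l IH]; simpl; [lra|rewrite IH; ring]. Qed.

Lemma integ_scal l c f : integ l (fun x => c * f x) = c * integ l f.
Proof. induction l as [|p l IH]; simpl; [lra|rewrite IH; ring]. Qed.

Lemma integ_ext_in l f h :
  (forall p, In p l -> f (snd p) = h (snd p)) -> integ l f = integ l h.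
Proof.
  induction l as [|p l IH]; intros Hfh; simpl; [reflexivity|].
  rewrite (Hfh p (in_eq p l)), IH; [reflexivity|].
  intros q Hq; apply Hfh, in_cons, Hq.
Qed.

Lemma integ_reweight l h f :
  integ (map (fun p => (fst p * h (snd p), snd p)) l) f = integ l (fun x => h x * f x).
Proof. induction l as [|p l IH]; simpl; [reflexivity|rewrite IH; ring]. Qed.

Lemma integ_affine_on_support l f a b :
  (forall p, In p l -> f (snd p) = 1) ->
  integ l (fun x => (a + b * x) * f x) = a * integ l (fun _ => 1) + b * mean l.
Proof.
  intros Hf; unfold mean.
  rewrite (integ_ext_in l _ (fun x => a * 1 + b * x)), integ_plus, !integ_scal.
  - reflexivity.
  - intros p Hp; rewrite Hf by exact Hp; ring.
Qed.

Lemma integ_Aop lam l f :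
  integ (Aop lam l) f = integ l (fun x => (1 - g lam + g lam / mean l * x) * f x).
Proof.
  unfold Aop; rewrite (integ_reweight l (fun x => 1 - g lam + g lam * x / mean l)).
  apply integ_ext_in; intros p _.
  unfold Rdiv; ring.
Qed.

End Integration.

Lemma g_pos_lt_1 lam : 0 < lam -> 0 < g lam < 1.
Proof.
  intros Hlam; unfold g.
  assert (1 - lam < exp (- lam)) by (apply (exp_ineq1 (- lam)); lra).
  assert (exp (- lam) < 1) by (rewrite <- exp_0; apply exp_increasing; lra).
  split.
  - apply Rdiv_lt_0_compat; lra.
  - apply (Rmult_lt_reg_r lam); [exact Hlam|]; field_simplify; lra.
Qed.

Definition mix (t : R) (rho : pmeasure) (y : R) : pmeasure :=
  map (fun p => (fst p * (1 - t), snd p)) rho ++ [(t, y)].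

Lemma integ_mix t rho y f :
  integ (mix t rho y) f = (1 - t) * integ rho f + t * f y.
Proof.
  unfold mix; rewrite integ_app, (integ_reweight rho (fun _ => 1 - t)), integ_scal.
  simpl; ring.
Qed.

Lemma is_Pp_mix t rho y : is_Pp rho -> 0 <= t <= 1 -> is_Pp (mix t rho y).
Proof.
  intros [Hpos Hmass] Ht; split.
  - apply Forall_app; split.
    + apply Forall_map; refine (Forall_impl _ _ Hpos); intros p Hp; simpl; nra.
    + constructor; [simpl; lra|constructor].
  - rewrite integ_mix, Hmass; ring.
Qed.

Lemma mean_ratio_mix t rho y :
  0 <= t <= 1 -> 5 * Rabs (mean rho) < t * y ->
  0 < mean (mix t rho y) /\ mean rho / mean (mix t rho y) <= 1 / 4.
Proof.
  intros Ht Hy; pose proof (Rabs_pos (mean rho)); pose proof (Rle_abs (mean rho)).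
  assert (HM : 4 * Rabs (mean rho) < mean (mix t rho y)).
  { unfold mean at 2; rewrite integ_mix; fold (mean rho).
    assert (- Rabs (mean rho) <= mean rho) by (unfold Rabs; destruct Rcase_abs; lra).
    nra. }
  split; [lra|].
  apply (Rmult_le_reg_r (mean (mix t rho y))); [lra|].
  unfold Rdiv; rewrite Rmult_assoc, Rinv_l; lra.
Qed.

Lemma exists_far_point t Y c : 0 < t -> exists y, Y < Rabs y /\ c < t * y.
Proof.
  intros Ht; exists (Rabs Y + 1 + Rabs c / t).
  pose proof (Rle_abs Y); pose proof (Rle_abs c).
  assert (0 <= Rabs c / t) by (apply Rle_mult_inv_pos; [apply Rabs_pos|exact Ht]).
  rewrite Rabs_pos_eq by (pose proof (Rabs_pos Y); lra).
  split; [lra|].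
  replace (t * (Rabs Y + 1 + Rabs c / t)) with (t * (Rabs Y + 1) + Rabs c) by (field; lra).
  pose proof (Rabs_pos Y); nra.
Qed.

Lemma mix_near rho qs delta :
  Forall Cc qs -> 0 < delta ->
  exists T Y, 0 < T /\
    forall t y, 0 <= t <= T -> Y < Rabs y -> near qs delta rho (mix t rho y).
Proof.
  intros Hqs Hdelta.
  destruct (Cc_common_radius qs Hqs) as (Y & _ & HY).
  destruct (Forall_exists_bound (integ rho) qs) as (K & HK0 & HK).
  set (T := delta / (K + 1)).
  assert (HT : T * (K + 1) = delta) by (unfold T; field; lra).
  assert (HT0 : 0 < T) by (apply Rdiv_lt_0_compat; lra).
  exists T, Y; split; [exact HT0|].
  intros t y Ht Hy; unfold near.
  rewrite Forall_forall in HY, HK |- *; intros phi Hphi.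
  rewrite integ_mix, (HY phi Hphi y Hy).
  replace ((1 - t) * integ rho phi + t * 0 - integ rho phi)
    with (- (t * integ rho phi)) by ring.
  rewrite Rabs_Ropp, Rabs_mult, (Rabs_pos_eq t) by lra.
  specialize (HK phi Hphi); pose proof (Rabs_pos (integ rho phi)).
  assert (t * Rabs (integ rho phi) <= T * K)
    by (apply Rmult_le_compat; lra).
  lra.
Qed.

(* [(|u| - |u - 1| + 1) / 2] is [u] clamped to [[0, 1]]; here [u = B + 1 - |x|]. *)
Definition plateau (B x : R) : R :=
  (Rabs (B + 1 - Rabs x) - Rabs (B - Rabs x) + 1) / 2.

Lemma plateau_in B x : Rabs x <= B -> plateau B x = 1.
Proof.
  intros Hx; unfold plateau.
  rewrite (Rabs_pos_eq (B + 1 - Rabs x)), (Rabs_pos_eq (B - Rabs x)) by lra; field.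
Qed.

Lemma plateau_out B x : B + 1 < Rabs x -> plateau B x = 0.
Proof.
  intros Hx; unfold plateau.
  rewrite (Rabs_left (B + 1 - Rabs x)), (Rabs_left (B - Rabs x)) by lra; field.
Qed.

Lemma plateau_Cc B : Cc (plateau B).
Proof.
  split.
  - intros x; unfold plateau, Rdiv.
    assert (Habs : forall c, continuity_pt (fun x => Rabs (c - Rabs x)) x).
    { intros c; apply (continuity_pt_comp (fun x => c - Rabs x) Rabs);
        [|apply Rcontinuity_abs].
      apply continuity_pt_minus; [apply continuity_pt_const; intros ? ?; reflexivity|].
      apply Rcontinuity_abs. }
    apply continuity_pt_mult; [|apply continuity_pt_const; intros ? ?; reflexivity].
    apply continuity_pt_plus; [|apply continuity_pt_const; intros ? ?; reflexivity].
    apply continuity_pt_minus; apply Habs.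
  - exists (B + 1); exact (plateau_out B).
Qed.

Lemma response_gap gl t r :
  0 < gl < 1 -> 0 <= t <= 1 -> r <= 1/4 ->
  gl / 2 <= Rabs ((1 - t) * (1 - gl + gl * r) - 1).
Proof.
  intros Hg Ht Hr.
  assert (Hc : 1 - gl + gl * r <= 1 - 3 * gl / 4) by nra.
  assert (Hprod : (1 - t) * (1 - gl + gl * r) <= 1 - 3 * gl / 4).
  { destruct (Rle_lt_dec 0 (1 - gl + gl * r)); nra. }
  rewrite Rabs_minus_sym, Rabs_pos_eq; lra.
Qed.

Section PlateauResponse.

Variables (lam B : R) (rho : pmeasure).
Hypothesis rho_Pp : is_Pp rho.
Hypothesis rho_support : forall p, In p rho -> Rabs (snd p) <= B.

Let plateau_on_support p : In p rho -> plateau B (snd p) = 1.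
Proof. intros Hp; apply plateau_in, rho_support, Hp. Qed.

Lemma integ_Aop_plateau : mean rho <> 0 -> integ (Aop lam rho) (plateau B) = 1.
Proof.
  intros Hm; destruct rho_Pp as [_ Hmass].
  rewrite integ_Aop, integ_affine_on_support, Hmass by exact plateau_on_support.
  field; exact Hm.
Qed.

Lemma integ_Aop_mix_plateau t y :
  B + 1 < Rabs y ->
  integ (Aop lam (mix t rho y)) (plateau B)
  = (1 - t) * (1 - g lam + g lam * (mean rho / mean (mix t rho y))).
Proof.
  intros Hy; destruct rho_Pp as [_ Hmass].
  rewrite integ_Aop, integ_mix, plateau_out, integ_affine_on_support, Hmass
    by (exact plateau_on_support || exact Hy).
  unfold Rdiv; ring.
Qed.

End PlateauResponse.

Theorem proposition1 (lam : R) (hlam : 0 < lam) (rho : pmeasure)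
  (hP : is_Pp rho) (hN : mean rho <> 0) :
  ~ A_continuous_at lam rho.
Proof.
  intros Hcont.
  pose proof (g_pos_lt_1 lam hlam) as Hg.
  destruct (Forall_exists_bound (fun p : R * R => snd p) rho) as (B & _ & HB).
  rewrite Forall_forall in HB.
  destruct (Hcont [plateau B] (g lam / 2)) as (qs & delta & Hqs & Hdelta & Hnear);
    [repeat constructor; apply plateau_Cc|lra|].
  destruct (mix_near rho qs delta Hqs Hdelta) as (T & Y & HT & Hmix).
  set (t := Rmin T 1).
  assert (Ht : 0 < t <= T /\ t <= 1)
    by (unfold t; repeat split; [apply Rmin_glb_lt|apply Rmin_l|apply Rmin_r]; lra).
  destruct (exists_far_point t (Rmax Y (B + 1)) (5 * Rabs (mean rho)))
    as (y & Hfar & Hty); [lra|].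
  pose proof (Rmax_l Y (B + 1)); pose proof (Rmax_r Y (B + 1)).
  destruct (mean_ratio_mix t rho y ltac:(lra) Hty) as [HM Hratio].
  specialize (Hnear (mix t rho y) (is_Pp_mix t rho y hP ltac:(lra)) ltac:(lra)
                (Hmix t y ltac:(lra) ltac:(lra))).
  inversion_clear Hnear as [|? ? Hgap _].
  rewrite (integ_Aop_mix_plateau lam B rho hP HB), (integ_Aop_plateau lam B rho hP HB hN)
    in Hgap by lra.
  pose proof (response_gap (g lam) t _ Hg ltac:(lra) Hratio).
  lra.
Qed.
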